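(* Let $i\ge 2$ be an integer and $k=2^i-1$. Let $k^-$ denote the least positive integer congruent to $-k$ modulo $i$. Then $$a_k\le 2^{k+k^-}+2^k-2^{k-i}-1.$$ If moreover $k=2^i-1$ is prime, then equality holds, i.e. $a_k=2^{k+i-1}+2^k-2^{k-i}-1$ (here $k^-=i-1$). Consequently, if there are infinitely many Mersenne primes, then $c_k/2^k\to 1/2$ as $k\to\infty$ through Mersenne primes.
   Context: For a positive integer $k$, $a_k$ is the smallest positive multiple of $k$ whose sum of binary digits equals $k$, and $c_k=a_k/k$. *)

From Stdlib Require Import Reals ClassicalEpsilon.
From mathcomp Require Import all_boot.

Set Implicit Arguments.
Unset Strict Implicit.
Unset Printing Implicit Defensive.

(* Sum of binary digits of n (fuel n suffices since n./2 < n for n > 0). *)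
Fixpoint bsum_aux (fuel n : nat) : nat :=
  match fuel with
  | 0 => 0
  | S f => if n is 0 then 0 else odd n + bsum_aux f n./2
  end.
Definition bsum (n : nat) : nat := bsum_aux n n.

Definition good (k n : nat) : bool := [&& 0 < n, k %| n & bsum n == k].

(* a_k = smallest positive multiple of k with binary digit sum k
   (defaults to 0 if no such multiple existed; it always exists for k >= 1). *)
Definition a (k : nat) : nat :=
  match excluded_middle_informative (exists n, good k n) with
  | left H => ex_minn H
  | right _ => 0
  end.

Definition c (k : nat) : R := Rdiv (INR (a k)) (INR k).

(* k^- : the least positive integer congruent to -k modulo i (for i > 0). *)
Definition kminus (i k : nat) : nat := i - k %% i.

Definition mersenne_prime (k : nat) : Prop := prime k /\ exists i, k = 2 ^ i - 1.

From Stdlib Require Import Reals Lra ClassicalEpsilon.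
From mathcomp Require Import all_boot zify.

(* 1. Binary digit sums [bsum]: the bit recursion, additivity over concatenation of
      bit strings, complementation (bsum n + bsum (2^L - 1 - n) = L for n < 2^L) and
      subadditivity bsum (x + y) <= bsum x + bsum y.
   2. Residues modulo k = 2^i - 1: as 2^i = 1 (mod k), folding a binary expansion in
      blocks of i bits keeps the residue and cannot raise the digit sum, so a positive
      number congruent to r in (0, k] has digit sum at least bsum r.
   3. The witness w(i, m) = 2^(k+m) + 2^k - 2^(k-i) - 1 has digit sum k and is a
      multiple of k whenever i | k + m; taking m = k^- gives the upper bound.
   4. If k = 1 (mod i), as for Mersenne primes by Fermat's little theorem, the residue
      facts force every good n to have at least k + i bits, and the single cleared bit
      among its k low bits to sit at an index p = 1 (mod i), hence p <= k - i; so
      n >= w(i, i - 1), which is therefore a_k.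
   5. From 2 w(i, i - 1) = k 2^k + O(2^k) we get |c_k / 2^k - 1/2| < 3/k along
      Mersenne primes k, hence the limit. *)

Lemma halfS_leq n : n.+1./2 <= n.
Proof. rewrite leq_half_double; lia. Qed.

Lemma bsum_aux_fuel f1 f2 n : n <= f1 -> n <= f2 -> bsum_aux f1 n = bsum_aux f2 n.
Proof.
elim: f1 f2 n => [|f1 IH] [|f2] [|n] //= H1 H2.
by congr (_ + _); apply: IH; exact: leq_trans (halfS_leq n) _.
Qed.

Lemma bsumE n : bsum n = if n is 0 then 0 else odd n + bsum n./2.
Proof.
case: n => // m; rewrite /bsum /=; congr (_ + _).
by apply: bsum_aux_fuel => //; exact: halfS_leq.
Qed.

Lemma bsum_bit (b : bool) m : bsum (b + m.*2) = b + bsum m.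
Proof.
rewrite [LHS]bsumE oddD odd_double addbF half_bit_double.
by case: b; case: m.
Qed.

Lemma binary_ind (P : nat -> Prop) :
  P 0 -> (forall (b : bool) h, P h -> P (b + h.*2)) -> forall n, P n.
Proof.
move=> P0 Pbit; elim/ltn_ind=> [[|n] IH] //.
rewrite -[n.+1]odd_double_half; apply: Pbit; apply: IH.
by rewrite ltnS halfS_leq.
Qed.

Lemma bsum_split p x y : y < 2 ^ p -> bsum (2 ^ p * x + y) = bsum x + bsum y.
Proof.
elim: p y => [|p IH] y; first by rewrite ltnS leqn0 => /eqP ->; rewrite mul1n !addn0.
move=> Hy; have Hy2 : y./2 < 2 ^ p by rewrite ltn_half_double -mul2n -expnS.
rewrite -[y]odd_double_half expnS.
have -> : 2 * 2 ^ p * x + (odd y + y./2.*2) = odd y + (2 ^ p * x + y./2).*2 by lia.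
by rewrite !bsum_bit IH // addnCA.
Qed.

Lemma bsum_pow p : bsum (2 ^ p) = 1.
Proof. by rewrite -[2 ^ p]addn0 -[2 ^ p in X in bsum X]muln1 bsum_split ?expn_gt0. Qed.

Lemma bsum_mersenne p : bsum (2 ^ p - 1) = p.
Proof.
elim: p => // p IH; have Hp : 0 < 2 ^ p by rewrite expn_gt0.
have -> : 2 ^ p.+1 - 1 = true + (2 ^ p - 1).*2 by rewrite expnS /=; lia.
by rewrite bsum_bit IH.
Qed.

Lemma bsum_compl L n : n < 2 ^ L -> bsum n + bsum (2 ^ L - 1 - n) = L.
Proof.
elim: L n => [|L IH] n; first by rewrite ltnS leqn0 => /eqP ->.
move=> Hn; have Hn2 : n./2 < 2 ^ L by rewrite ltn_half_double -mul2n -expnS.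
have -> : 2 ^ L.+1 - 1 - n = (~~ odd n) + (2 ^ L - 1 - n./2).*2.
  by move: (odd_double_half n) Hn; rewrite expnS; case: (odd n) => /=; lia.
rewrite -[n in bsum n]odd_double_half !bsum_bit.
by have := IH _ Hn2; case: (odd n) => /=; lia.
Qed.

Lemma bsum_eq0 n : bsum n = 0 -> n = 0.
Proof. by elim/binary_ind: n => // [[]] h IH; rewrite bsum_bit //= => /IH ->. Qed.

Lemma bsum_eq1 n : bsum n = 1 -> exists p, n = 2 ^ p.
Proof.
elim/binary_ind: n => // [[]] h IH; rewrite bsum_bit /=.
- by rewrite add1n => -[/bsum_eq0 ->]; exists 0.
- by rewrite add0n => /IH [p ->]; exists p.+1; rewrite expnS mul2n.
Qed.

Lemma bsum_succ n : bsum n.+1 <= (bsum n).+1.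
Proof.
elim/binary_ind: n => // [[]] h IH; rewrite bsum_bit /=.
- have -> : (1 + h.*2).+1 = false + h.+1.*2 by rewrite /=; lia.
  by rewrite bsum_bit /=; lia.
- by have -> : (0 + h.*2).+1 = true + h.*2 by []; rewrite bsum_bit.
Qed.

(* Subadditivity: carries can only lower the digit sum. *)
Lemma bsum_add x y : bsum (x + y) <= bsum x + bsum y.
Proof.
elim/binary_ind: x y => // b h IH y; rewrite -[y]odd_double_half.
move: (odd y) (y./2) => c g.
have carry (d : bool) : bsum (h + g + d) <= bsum h + bsum g + d.
  case: d; last by rewrite !addn0.
  by rewrite !addn1 (leq_trans (bsum_succ _)) // ltnS.
have -> : b + h.*2 + (c + g.*2) = (b (+) c) + (h + g + (b && c)).*2.
  by case: b c => [] [] /=; lia.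
rewrite !bsum_bit; have := carry (b && c); case: b c => [] [] /=; lia.
Qed.

Lemma bsum_one_gap L m : 0 < L -> m < 2 ^ L -> bsum m = L.-1 ->
  exists2 p, p < L & m = 2 ^ L - 1 - 2 ^ p.
Proof.
move=> HL Hm Hb; have := bsum_compl L m Hm; rewrite Hb => Hc.
have [p Ep] : exists p, 2 ^ L - 1 - m = 2 ^ p by apply: bsum_eq1; lia.
exists p; last by lia.
by rewrite -(ltn_exp2l _ _ (ltnSn 1)); have := expn_gt0 2 L; lia.
Qed.

(* Since 2^i = 1 (mod 2^i - 1), powers of 2 modulo 2^i - 1 only depend on the
   exponent modulo i. *)
Lemma pow_mod_mersenne i m : 2 ^ m = 2 ^ (m %% i) %[mod 2 ^ i - 1].
Proof.
have pow_i : 2 ^ i = 1 %[mod 2 ^ i - 1] by rewrite -{1}(subnK (expn_gt0 2 i)) modnDl.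
rewrite {1}(divn_eq m i) [_ * i]mulnC expnD expnM -modnMml.
by rewrite -(modnXm _ _ (2 ^ i)) pow_i modnXm exp1n modnMml mul1n.
Qed.

Lemma le_mersenne i : i <= 2 ^ i - 1.
Proof. by have := ltn_expl i (ltnSn 1); lia. Qed.

Section MersenneResidues.

Variable i : nat.
Hypothesis i_gt1 : 1 < i.
Local Notation k := (2 ^ i - 1).

Let i_gt0 : 0 < i. Proof. exact: ltnW. Qed.
Let pow_i_gt1 : 1 < 2 ^ i. Proof. by rewrite -{1}(expn0 2) ltn_exp2l. Qed.

Lemma pow_lt_mersenne e : e < i -> 2 ^ e < k.
Proof.
move=> He; have H1 : 2 ^ e <= 2 ^ i.-1 by rewrite leq_exp2l //; lia.
have H2 : 2 ^ i = 2 * 2 ^ i.-1 by rewrite -expnS prednK.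
have H3 : 1 < 2 ^ i.-1 by rewrite -{1}(expn0 2) ltn_exp2l //; lia.
lia.
Qed.

Lemma pow_mod_mersenne_inj e f : e < i -> f < i -> 2 ^ e = 2 ^ f %[mod k] -> e = f.
Proof.
move=> He Hf; rewrite !modn_small ?pow_lt_mersenne // => /eqP.
by rewrite eqn_exp2l // => /eqP.
Qed.

(* Folding: writing x = 2^i q + s and replacing x by q + s preserves x modulo k and
   does not increase the digit sum; iterating lands in the range (0, k]. *)
Lemma mersenne_fold x : 0 < x ->
  exists t, [/\ 0 < t, t <= k, t = x %[mod k] & bsum t <= bsum x].
Proof.
elim/ltn_ind: x => x IH Hx0.
have [Hlt | Hge] := ltnP x (2 ^ i); first by exists x; split=> //; lia.
have Ex := divn_eq x (2 ^ i); set q := x %/ 2 ^ i in Ex; set s := x %% 2 ^ i in Ex.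
have Hs : s < 2 ^ i by rewrite ltn_mod expn_gt0.
have Hq : 0 < q by rewrite divn_gt0 ?expn_gt0.
have Hqq : q < q * 2 ^ i by rewrite ltn_Pmulr.
have Hqs : q + s < x by lia.
have [t [Ht0 Htk Htm Htb]] := IH _ Hqs (ltn_addr s Hq).
exists t; split=> //.
- have -> : x = q * k + (q + s) by rewrite mulnBr muln1; lia.
  by rewrite modnMDl.
- by rewrite Ex mulnC bsum_split // (leq_trans Htb (bsum_add _ _)).
Qed.

Lemma mersenne_residue_bsum x r : 0 < x -> 0 < r <= k -> x = r %[mod k] ->
  bsum r <= bsum x.
Proof.
move=> Hx /andP [Hr0 Hrk] Hxr; have [t [Ht0 Htk Htx Htb]] := mersenne_fold x Hx.
suff -> : r = t by [].
have : r.-1 = t.-1 %[mod k].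
  by apply/eqP; rewrite -(eqn_modDr 1) !addn1 !prednK // -Hxr Htx.
by rewrite !modn_small; lia.
Qed.

(* If Z has digit sum j and Z + 1 = 2^(j+1) (mod k), then j >= i: for smaller j,
   Z would be lighter than its residue 2^(j+1) - 1, or than k itself. *)
Lemma complement_bsum_ge Z j : bsum Z = j -> Z + 1 = 2 ^ (j.+1 %% i) %[mod k] -> i <= j.
Proof.
move=> HZ HZm; have [Hj | Hj] := ltnP j.+1 i.
  rewrite (modn_small Hj) in HZm; exfalso.
  have [Z0 | Zpos] := posnP Z.
    have E : 2 ^ 0 = 2 ^ j.+1 %[mod k] by rewrite expn0 -HZm Z0.
    by have := pow_mod_mersenne_inj _ _ i_gt0 Hj E.
  have Hr : 0 < 2 ^ j.+1 - 1 <= k.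
    by have := pow_lt_mersenne _ Hj; have := ltn_exp2l 0 j.+1 (ltnSn 1); lia.
  have HZr : Z = 2 ^ j.+1 - 1 %[mod k].
    by apply/eqP; rewrite -(eqn_modDr 1) subnK ?expn_gt0 //; apply/eqP.
  by have := mersenne_residue_bsum Z _ Zpos Hr HZr; rewrite bsum_mersenne; lia.
have [//|Hji] := leqP i j.
have Ej : j.+1 = i by lia.
rewrite Ej modnn expn0 in HZm.
have Zpos : 0 < Z by case: Z HZ {HZm} => // HZ; move: Ej; rewrite -HZ bsumE; lia.
have HZk : Z = k %[mod k].
  by apply/eqP; rewrite -(eqn_modDr 1) subnK ?expn_gt0 // HZm (pow_mod_mersenne i) modnn.
have Hk : 0 < k <= k by lia.
by have := mersenne_residue_bsum Z _ Zpos Hk HZk; rewrite bsum_mersenne HZ; lia.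
Qed.

End MersenneResidues.

Lemma kminus_spec i k : 0 < i -> 0 < kminus i k /\ i %| k + kminus i k.
Proof.
move=> Hi; rewrite /kminus subn_gt0 ltn_mod Hi; split=> //.
rewrite {1}(divn_eq k i) -addnA subnKC; last by rewrite ltnW // ltn_mod.
by rewrite -mulSnr dvdn_mull.
Qed.

(* The candidate multiple of k = 2^i - 1, with binary expansion
   1 0...0 1...1 0 1...1: a leading 1 at position k + m and the k low bits all set
   except the one at position k - i. *)
Definition witness (i m : nat) : nat :=
  2 ^ ((2 ^ i - 1) + m) + 2 ^ (2 ^ i - 1) - 2 ^ ((2 ^ i - 1) - i) - 1.

(* Upper bound: the witness is good as soon as i divides k + m, since then
   2^(k+m) = 1 and 2^(k-i) = 2^k modulo k. *)
Lemma witness_good i m : 0 < i -> 0 < m -> i %| (2 ^ i - 1) + m ->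
  good (2 ^ i - 1) (witness i m).
Proof.
move=> Hi Hm Hdiv; rewrite /witness; set k := 2 ^ i - 1 in Hdiv *.
have Hik : i <= k := le_mersenne i.
have Hp0 : 0 < 2 ^ (k - i) by rewrite expn_gt0.
have Hp1 : 2 ^ (k - i) < 2 ^ k by rewrite ltn_exp2l //; lia.
have Hp2 : 2 ^ k < 2 ^ (k + m) by rewrite ltn_exp2l //; lia.
set w := 2 ^ (k + m) + 2 ^ k - 2 ^ (k - i) - 1.
have Ew : w + (2 ^ (k - i) + 1) = 2 ^ (k + m) + 2 ^ k by rewrite /w; lia.
have Ew' : w = 2 ^ (k + m) * 1 + (2 ^ k - 1 - 2 ^ (k - i)) by rewrite /w; lia.
apply/and3P; split; first by rewrite Ew' muln1 addn_gt0 expn_gt0.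
- have top : 2 ^ (k + m) = 1 %[mod k] by rewrite (pow_mod_mersenne i) (eqP Hdiv).
  have gap : 2 ^ (k - i) = 2 ^ k %[mod k].
    rewrite (pow_mod_mersenne i) [in RHS](pow_mod_mersenne i).
    by rewrite -[in RHS](subnK Hik) modnDr.
  have : w + (2 ^ (k - i) + 1) = 0 + (2 ^ (k - i) + 1) %[mod k].
    by rewrite Ew -modnDm top -gap modnDm add0n addnC.
  by move/eqP; rewrite eqn_modDr mod0n.
- rewrite Ew' bsum_split; last by apply: leq_ltn_trans Hp2; rewrite -subnDA leq_subr.
  by have := bsum_compl k _ Hp1; rewrite bsum_pow => /eqP.
Qed.

Lemma congr_lt_gap d p q : p < q -> p = q %[mod d] -> p + d <= q.
Proof.
move=> Hpq Hmod; have Hpq' := ltnW Hpq.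
have Hdvd : d %| q - p by rewrite -eqn_mod_dvd // Hmod.
by rewrite -leq_subRL // dvdn_leq // subn_gt0.
Qed.

Section LowerBound.

(* For the lower bound we assume k = 1 (mod i), which holds when k is prime. *)
Variable i : nat.
Hypothesis i_gt1 : 1 < i.
Local Notation k := (2 ^ i - 1).
Hypothesis k_mod_i : k %% i = 1.

Let i_le_k : i <= k. Proof. exact: le_mersenne. Qed.

(* Any good number has at least k + i binary digits: its complement Z below 2^L
   has digit sum L - k and Z + 1 = 2^L = 2^(L - k + 1) (mod k). *)
Lemma good_length n L : good k n -> n < 2 ^ L -> k + i <= L.
Proof.
move=> /and3P [_ Hd /eqP Hb] HnL.
have Hc := bsum_compl L n HnL; rewrite Hb in Hc.
have HkL : k <= L by rewrite -Hc leq_addr.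
set Z := 2 ^ L - 1 - n in Hc.
have EZ : Z + 1 = 2 ^ L - n by rewrite /Z subnAC subnK // subn_gt0.
have HZm : Z + 1 = 2 ^ ((L - k).+1 %% i) %[mod k].
  have HL : L %% i = (L - k).+1 %% i by rewrite -{1}(subnK HkL) -modnDmr k_mod_i addn1.
  have E : (2 ^ L - n) + n = 2 ^ (L %% i) %[mod k].
    by rewrite (subnK (ltnW HnL)) (pow_mod_mersenne i).
  by rewrite -modnDmr (eqP Hd) addn0 in E; rewrite EZ E HL.
have HZb : bsum Z = L - k by rewrite -Hc addKn.
by rewrite -leq_subRL //; exact: complement_bsum_ge _ i_gt1 _ _ HZb HZm.
Qed.

(* If n + 2^p + 1 = 2^(k+i-1) + 2^k with k | n, then p = 1 (mod i): reducing modulo k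
   leaves 2^p = 2, because 2^(k+i-1) = 1 and 2^k = 2 (mod k). *)
Lemma cleared_bit_mod n p : k %| n -> n + 2 ^ p + 1 = 2 ^ (k + i - 1) + 2 ^ k -> p %% i = 1.
Proof.
move=> Hd E.
have top : 2 ^ (k + i - 1) = 1 %[mod k].
  rewrite (pow_mod_mersenne i) -addnBA ?(ltnW i_gt1) // -modnDml k_mod_i.
  by rewrite addnBA ?(ltnW i_gt1) // addKn modnn.
have low : 2 ^ k = 2 ^ 1 %[mod k] by rewrite (pow_mod_mersenne i) k_mod_i.
have H : 0 + (2 ^ p + 1) = 0 + (2 + 1) %[mod k].
  by rewrite -{1}(eqP Hd) modnDml addnA E -modnDm top low modnDm.
move: H; rewrite !add0n => /eqP; rewrite eqn_modDr (pow_mod_mersenne i p) => /eqP H.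
by apply: (pow_mod_mersenne_inj _ i_gt1 _ 1 _ i_gt1 H); rewrite ltn_mod; lia.
Qed.

(* Lower bound: a good n has its top bit at position k + i - 1; its k low bits then
   carry digit sum k - 1, i.e. exactly one of them is cleared, at an index p = 1 (mod i)
   below k, hence p <= k - i. *)
Lemma witness_minimal n : good k n -> witness i (i - 1) <= n.
Proof.
move=> Hn; case/and3P: (Hn) => Hn0 Hd /eqP Hb.
have Hlen := good_length n _ Hn (trunc_log_ltn n (ltnSn 1)).
have Htop : 2 ^ (k + i - 1) <= n.
  apply: leq_trans (trunc_logP (ltnSn 1) Hn0); rewrite leq_exp2l //; lia.
have -> : witness i (i - 1) = 2 ^ (k + i - 1) + 2 ^ k - 2 ^ (k - i) - 1.
  by rewrite /witness addnBA // ltnW.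
set m := n - 2 ^ (k + i - 1).
have [Hbig | Hm] := leqP (2 ^ k) m; first by clear Hd; lia.
have Hkk : 2 ^ k <= 2 ^ (k + i - 1) by rewrite leq_exp2l //; lia.
have Hmb : bsum m = k.-1.
  move: Hb; rewrite -(subnK Htop) -/m addnC -[2 ^ _]muln1 bsum_split; last by lia.
  by rewrite (bsum_pow 0) add1n => <-.
have [p Hp Em] := bsum_one_gap k m (leq_trans (ltnW i_gt1) i_le_k) Hm Hmb.
have Hpk : 2 ^ p < 2 ^ k by rewrite ltn_exp2l.
have E : n + 2 ^ p + 1 = 2 ^ (k + i - 1) + 2 ^ k by clear Hd; lia.
have Hgap : p + i <= k by apply: congr_lt_gap Hp _; rewrite /= (cleared_bit_mod n p Hd E) k_mod_i.
have : 2 ^ p <= 2 ^ (k - i) by rewrite leq_exp2l //; lia.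
by clear Hd; lia.
Qed.

End LowerBound.

Lemma a_minimal k n : good k n -> good k (a k) /\ a k <= n.
Proof.
move=> Hn; rewrite /a; case: excluded_middle_informative => [H | []]; last by exists n.
by case: ex_minnP => m Hm Hmin; split=> //; exact: Hmin.
Qed.

(* If 2^i - 1 is prime then so is i, since d | i implies 2^d - 1 | 2^i - 1. *)
Lemma mersenne_prime_exponent i : prime (2 ^ i - 1) -> prime i.
Proof.
move=> Hk; have Hi : 1 < i by case: i Hk => [|[|i]].
apply/primeP; split=> // d Hdi.
have Hdv : 2 ^ d - 1 %| 2 ^ i - 1.
  by rewrite -eqn_mod_dvd ?expn_gt0 // (pow_mod_mersenne d i) (eqP Hdi).
have /primeP [_ Hdiv] := Hk; case/orP: (Hdiv _ Hdv) => /eqP H; clear Hdv Hdi Hdiv.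
- have : 2 ^ d = 2 ^ 1 by have := expn_gt0 2 d; lia.
  by move/eqP; rewrite eqn_exp2l // => ->.
- have : 2 ^ d = 2 ^ i by have := expn_gt0 2 d; have := expn_gt0 2 i; lia.
  by move/eqP; rewrite eqn_exp2l // => ->; rewrite orbT.
Qed.

(* For a Mersenne prime k = 2^i - 1, Fermat's little theorem gives k = 1 (mod i). *)
Lemma mersenne_prime_mod i : prime (2 ^ i - 1) -> (2 ^ i - 1) %% i = 1.
Proof.
move=> Hk; have Hi := mersenne_prime_exponent i Hk.
have : (2 ^ i - 1) + 1 = 1 + 1 %[mod i] by rewrite subnK ?expn_gt0 // fermat_little.
by move/eqP; rewrite eqn_modDr (modn_small (prime_gt1 Hi)) => /eqP.
Qed.

Lemma a_mersenne_prime i : 1 < i -> prime (2 ^ i - 1) -> a (2 ^ i - 1) = witness i (i - 1).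
Proof.
move=> Hi Hk; have Hmod := mersenne_prime_mod i Hk.
have Hdiv : i %| (2 ^ i - 1) + (i - 1).
  by rewrite /dvdn -modnDml Hmod addnBA ?(ltnW Hi) // addKn modnn.
have Hi1 : 0 < i - 1 by rewrite subn_gt0.
have [Ha Hle] := a_minimal _ _ (witness_good i (i - 1) (ltnW Hi) Hi1 Hdiv).
by apply/eqP; rewrite eqn_leq Hle witness_minimal.
Qed.

(* Doubling the witness: 2 w(i, i-1) = k 2^k + A with A < 3 2^k, as 2^(k+i) = (k+1) 2^k. *)
Lemma witness_double i : 1 < i ->
  2 * witness i (i - 1) =
    (2 ^ i - 1) * 2 ^ (2 ^ i - 1) + (3 * 2 ^ (2 ^ i - 1) - 2 * 2 ^ (2 ^ i - 1 - i) - 2).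
Proof.
move=> Hi; rewrite /witness; set k := 2 ^ i - 1.
have Hik : i <= k := le_mersenne i.
have Hp1 : 2 ^ (k - i) < 2 ^ k by rewrite ltn_exp2l //; lia.
have Htop : 2 * 2 ^ (k + (i - 1)) = k * 2 ^ k + 2 ^ k.
  rewrite -expnS -addnS subn1 prednK ?(ltnW Hi) // expnD mulnC -mulSnr.
  by rewrite /k subn1 prednK ?expn_gt0.
lia.
Qed.

Local Open Scope R_scope.

Lemma INR_pow2 n : INR (2 ^ n) = 2 ^ n.
Proof. by elim: n => // n IH; rewrite expnS -multE mult_INR IH /=; lra. Qed.

Lemma ratio_near_half (k T A : nat) : (0 < k)%N -> (2 * T = k * 2 ^ k + A)%N ->
  (A < 3 * 2 ^ k)%N -> Rabs (INR T / INR k / 2 ^ k - 1 / 2) < 3 / INR k.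
Proof.
move=> /ltP Hk /(f_equal INR) E /ltP /lt_INR HA.
rewrite -!multE -plusE !mult_INR plus_INR mult_INR INR_pow2 /= in E.
rewrite -multE mult_INR INR_pow2 /= in HA.
have HK : 0 < INR k by apply: lt_0_INR.
have HP : 0 < 2 ^ k by apply: pow_lt; lra.
have HA0 := pos_INR A.
have -> : INR T / INR k / 2 ^ k - 1 / 2 = INR A / (2 * INR k * 2 ^ k).
  have ET : INR T = (INR k * 2 ^ k + INR A) / 2 by lra.
  by rewrite ET; field; lra.
have HD : 0 < 2 * INR k * 2 ^ k by nra.
have HDinv : 0 < / (2 * INR k * 2 ^ k) by exact: Rinv_0_lt_compat.
rewrite Rabs_right; last by apply: Rle_ge; rewrite /Rdiv; apply: Rmult_le_pos; lra.
have -> : 3 / INR k = (6 * 2 ^ k) / (2 * INR k * 2 ^ k) by field; lra.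
by apply: Rmult_lt_compat_r; lra.
Qed.

Lemma c_mersenne_near_half k : mersenne_prime k -> Rabs (c k / 2 ^ k - 1 / 2) < 3 / INR k.
Proof.
move=> [Hk [i Ei]]; subst k.
have Hi : (1 < i)%N by case: i Hk => [|[|i]].
rewrite /c (a_mersenne_prime i Hi Hk).
apply: (ratio_near_half _ _ _ (prime_gt0 Hk) (witness_double i Hi)).
by have := expn_gt0 2 (2 ^ i - 1); lia.
Qed.

Lemma c_mersenne_limit eps : 0 < eps -> exists N : nat, forall k : nat,
  mersenne_prime k -> (N <= k)%N -> Rabs (c k / 2 ^ k - 1 / 2) < eps.
Proof.
move=> He; have [N HN] := INR_archimed eps 3 He.
exists N => k Hk HNk; apply: Rlt_le_trans (c_mersenne_near_half k Hk) _.
have HK : 0 < INR k by apply/lt_0_INR/ltP; case: Hk => /prime_gt0.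
have HNK : INR N <= INR k by apply/le_INR/leP.
apply: (Rmult_le_reg_r (INR k)) => //; rewrite /Rdiv Rmult_assoc Rinv_l; nra.
Qed.

Local Close Scope R_scope.

Theorem mainTheorem7 :
  (forall i : nat, 2 <= i ->
     a (2 ^ i - 1) <=
       2 ^ ((2 ^ i - 1) + kminus i (2 ^ i - 1)) + 2 ^ (2 ^ i - 1)
       - 2 ^ ((2 ^ i - 1) - i) - 1) /\
  (forall i : nat, 2 <= i -> prime (2 ^ i - 1) ->
     kminus i (2 ^ i - 1) = i - 1 /\
     a (2 ^ i - 1) =
       2 ^ ((2 ^ i - 1) + i - 1) + 2 ^ (2 ^ i - 1)
       - 2 ^ ((2 ^ i - 1) - i) - 1) /\
  ((forall N : nat, exists k : nat, N <= k /\ mersenne_prime k) ->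
   forall eps : R, Rlt R0 eps ->
   exists N : nat, forall k : nat, mersenne_prime k -> N <= k ->
     Rlt (Rabs (Rminus (Rdiv (c k) (pow (IZR 2%Z) k)) (Rdiv R1 (IZR 2%Z)))) eps).
Proof.
split; [|split].
-
  move=> i Hi; have [Hm Hdiv] := kminus_spec i (2 ^ i - 1) (ltnW Hi).
  exact: (a_minimal _ _ (witness_good i _ (ltnW Hi) Hm Hdiv)).2.
- (* equality for Mersenne primes, where k = 1 (mod i) makes k^- = i - 1 *)
  move=> i Hi Hk; split; first by rewrite /kminus mersenne_prime_mod.
  by rewrite a_mersenne_prime // /witness addnBA // ltnW.
- (* the asymptotics hold along Mersenne primes, however many there are *)
  move=> _; exact: c_mersenne_limit.
Qed.
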